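(* Let $G$ and $H$ be locally compact abelian groups with $H$ torsion-free, and let $f:G\to H$ be a continuous homomorphism. Then $f(G_{op})\subseteq H_{op}$.
   Context: A subgroup $H$ of an abelian group $G$ is pure if $nH=H\cap nG$ for every positive integer $n$. For an LCA group $G$, $G_{op}$ denotes the intersection of all open pure subgroups of $G$. *)

From HB Require Import structures.
From mathcomp Require Import all_boot all_order all_algebra.
From mathcomp Require Import all_classical all_reals all_analysis.
Set Implicit Arguments. Unset Strict Implicit. Unset Printing Implicit Defensive.
Import Order.TTheory GRing.Theory Num.Theory.
Local Open Scope classical_set_scope.
Local Open Scope ring_scope.

Definition LCA (G : topologicalZmodType) : Prop :=
  hausdorff_space G /\ locally_compact [set: G].

Definition is_subgroup (G : zmodType) (S : set G) : Prop :=
  S 0 /\ (forall x y, S x -> S y -> S (x - y)).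

Definition nmul (G : zmodType) (n : nat) (S : set G) : set G :=
  [set x *+ n | x in S].

Definition pure_subgroup (G : zmodType) (S : set G) : Prop :=
  is_subgroup S /\ forall n : nat, (0 < n)%N -> nmul n S = S `&` nmul n [set: G].

Definition open_pure_subgroup (G : topologicalZmodType) (S : set G) : Prop :=
  open S /\ pure_subgroup S.

Definition G_op (G : topologicalZmodType) : set G :=
  \bigcap_(S in [set S : set G | open_pure_subgroup S]) S.

Definition torsion_free (G : zmodType) : Prop :=
  forall (n : nat) (x : G), (0 < n)%N -> x *+ n = 0 -> x = 0.
Arguments G_op : clear implicits.

From HB Require Import structures.
From mathcomp Require Import all_boot all_order all_algebra.
From mathcomp Require Import all_classical all_reals all_analysis.
Set Implicit Arguments. Unset Strict Implicit. Unset Printing Implicit Defensive.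
Import Order.TTheory GRing.Theory Num.Theory.
Local Open Scope classical_set_scope.
Local Open Scope ring_scope.

(* The whole argument is that the preimage of an open pure
   subgroup S of H under f is an open pure subgroup of G:
   - preimages of subgroups under homomorphisms are subgroups;
   - preimages of open sets under continuous maps are open;
   - purity transfers because H is torsion-free: if g = n y lies in f^-1(S),
     then f g = n (f y) lies in S ∩ nH = nS, say f g = n s with s in S, so
     n (f y - s) = 0 and hence f y = s, i.e. y already lies in f^-1(S). *)

Lemma subgroup_mulrn (G : zmodType) (S : set G) (x : G) (n : nat) :
  is_subgroup S -> S x -> S (x *+ n).
Proof.
move=> [S0 SB] Sx; have SN : S (- x) by rewrite -[- x]add0r; exact: SB.
elim: n => [|n IH]; first by rewrite mulr0n.
by have := SB _ _ IH SN; rewrite opprK mulrS addrC.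
Qed.

Section HomomorphismPreimage.
Variables (G H : zmodType) (f : G -> H).
Hypothesis fD : forall x y : G, f (x + y) = f x + f y.

Lemma hom0 : f 0 = 0.
Proof. by apply: (@addrI _ (f 0)); rewrite -fD !addr0. Qed.

Lemma homB (x y : G) : f (x - y) = f x - f y.
Proof.
have fN z : f (- z) = - f z.
  by apply/eqP; rewrite -subr_eq0 opprK -fD addNr hom0.
by rewrite fD fN.
Qed.

Lemma homMn (x : G) (n : nat) : f (x *+ n) = f x *+ n.
Proof. by elim: n => [|n IH]; rewrite ?mulr0n ?hom0 // !mulrS fD IH. Qed.

Lemma preimage_subgroup (S : set H) : is_subgroup S -> is_subgroup (f @^-1` S).
Proof.
move=> [S0 SB]; split; first by rewrite /= hom0.
by move=> x y Sx Sy; rewrite /= homB; exact: SB.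
Qed.

Lemma preimage_pure (S : set H) :
  torsion_free H -> pure_subgroup S -> pure_subgroup (f @^-1` S).
Proof.
move=> tfH [subS pureS]; split; first exact: preimage_subgroup.
move=> n n0; apply/seteqP; split.
  move=> _ [y Sy <-]; split; last by exists y.
  by rewrite /= homMn; exact: subgroup_mulrn.
move=> g [Sfg [y _ yg]].
have : (S `&` nmul n [set: H]) (f g) by split=> //; exists (f y); rewrite // -homMn yg.
rewrite -pureS // => -[s Ss sfg].
have fys : f y = s.
  apply/eqP; rewrite -subr_eq0; apply/eqP; apply: (tfH n) => //.
  by rewrite mulrnBl -homMn yg sfg subrr.
by exists y; rewrite // /= fys.
Qed.

End HomomorphismPreimage.

Lemma preimage_open_pure (G H : topologicalZmodType) (f : G -> H) (S : set H) :
  torsion_free H -> (forall x y : G, f (x + y) = f x + f y) -> continuous f ->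
  open_pure_subgroup S -> open_pure_subgroup (f @^-1` S).
Proof.
move=> tfH fD fc [oS pS]; split; last exact: (preimage_pure fD tfH pS).
by apply: open_comp => // y _; exact: fc.
Qed.

Lemma image_G_op_sub (G H : topologicalZmodType) (f : G -> H) :
  torsion_free H -> (forall x y : G, f (x + y) = f x + f y) -> continuous f ->
  f @` G_op G `<=` G_op H.
Proof.
move=> tfH fD fc _ [x Gx <-] S opS.
exact: (Gx (f @^-1` S) (preimage_open_pure tfH fD fc opS)).
Qed.

Theorem lemma8 (G H : topologicalZmodType) (f : G -> H) :
  LCA G -> LCA H -> torsion_free H ->
  (forall x y : G, f (x + y) = f x + f y) -> continuous f ->
  f @` G_op G `<=` G_op H.
Proof. by move=> _ _; exact: image_G_op_sub. Qed.
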